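(* Consider the stochastic energy exchange model and the notation of the context. For every sufficiently small $\eta>0$ there is a constant $C>0$ depending on $N$ and $\eta$ such that for every $\mathbf{E}\in\mathbb{R}^N_+$, $1\le n\le N$ and $1\le k\le N-n+1$, $$\mathbb{E}_{\mathbf{E}}\big[V_{n,k}(\mathbf{E}_{\tau_1^+})\mathbf{1}_{\mathcal{C}_k(\tau_1)}\big]\le\frac{C}{\mathcal{R}}\Big(\sum_{i=0}^{n-1}E_{k+i}\Big)^{a_n\eta-\frac12}$$ and $$\mathbb{E}_{\mathbf{E}}\big[V_{n,k}(\mathbf{E}_{\tau_1^+})\mathbf{1}_{\mathcal{C}_{k+n}(\tau_1)}\big]\le\frac{C}{\mathcal{R}}\Big(\sum_{i=0}^{n-1}E_{k+i}\Big)^{a_n\eta-\frac12}.$$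
   Context: Fix $N\ge1$, $T_L,T_R>0$, a sufficiently large $K$ ($K\gg T_L,T_R$) and $R(a,b)=\min\{K,\sqrt{\min(a,b)}\}$. Write $E_0:=T_L$, $E_{N+1}:=T_R$. The stochastic energy exchange model is the Markov jump process $\mathbf{E}_t=(E_1(t),\dots,E_N(t))$ on $\mathbb{R}^N_+$ with independent exponential clocks $i=1,\dots,N+1$, clock $i$ having rate $R_i=R(E_{i-1},E_i)$. When clock $i$ with $2\le i\le N$ rings, $(E_{i-1},E_i)\mapsto(p(E_{i-1}+E_i),(1-p)(E_{i-1}+E_i))$, $p$ uniform on $(0,1)$; when clock $1$ (resp. $N+1$) rings, $E_1\mapsto p(E_1+X_L)$ (resp. $E_N\mapsto p(E_N+X_R)$), $X_L,X_R$ exponential with means $T_L,T_R$; all randomness independent. Let $\tau_1$ be the time of the first clock ring, $\mathcal{C}_i(\tau_1)$ the event that the ring at $\tau_1$ is clock $i$, $\mathbf{E}_{\tau_1^+}$ the configuration immediately after that ring, $\mathcal{R}=\sum_{i=1}^{N+1}R_i$, and $\mathbb{E}_{\mathbf{E}}$ expectation with $\mathbf{E}_0=\mathbf{E}$. Let $a_m=1-\frac{2^{m-1}-1}{2^N-1}$ and $V_{n,k}(\mathbf{E})=\big(\sum_{j=0}^{n-1}E_{k+j}\big)^{a_n\eta-1}$. *)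

From HB Require Import structures.
From mathcomp Require Import all_boot all_order all_algebra.
From mathcomp Require Import all_classical all_reals all_analysis.
Set Implicit Arguments. Unset Strict Implicit. Unset Printing Implicit Defensive.
Import Order.TTheory GRing.Theory Num.Theory.
Local Open Scope ring_scope.

(* Configurations E = (E_1,...,E_N) are represented by functions nat -> R;
   only the values at 1..N matter. *)

Definition ext {R : realType} (N : nat) (TL TR : R) (E : nat -> R) (j : nat) : R :=
  if j == 0%N then TL else if j == N.+1 then TR else E j.

Definition rateR {R : realType} (K a b : R) : R :=
  Num.min K (Num.sqrt (Num.min a b)).

Definition clock_rate {R : realType} (N : nat) (TL TR K : R) (E : nat -> R)
  (i : nat) : R :=
  rateR K (ext N TL TR E i.-1) (ext N TL TR E i).

Definition total_rate {R : realType} (N : nat) (TL TR K : R) (E : nat -> R) : R :=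
  \sum_(1 <= i < N.+2) clock_rate N TL TR K E i.

(* Configuration right after clock i rings, with uniform p and
   (for the boundary clocks) the bath variable x = X_L (i = 1) or X_R (i = N+1). *)
Definition jump {R : realType} (N i : nat) (E : nat -> R) (p x : R) : nat -> R :=
  fun j =>
    if i == 1%N then (if j == 1%N then p * (E 1%N + x) else E j)
    else if i == N.+1 then (if j == N then p * (E N + x) else E j)
    else if j == i.-1 then p * (E i.-1 + E i)
    else if j == i then (1 - p) * (E i.-1 + E i)
    else E j.

(* mean of the bath variable used by clock i (irrelevant for interior clocks) *)
Definition bath_mean {R : realType} (TL TR : R) (i : nat) : R :=
  if i == 1%N then TL else TR.

(* E_E[ f(E_{tau_1^+}) 1_{C_i(tau_1)} ] : with competing independent
   exponential clocks, clock i rings first with probability R_i / calR,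
   independently of the (uniform p, exponential X) randomness of the update. *)
Definition first_jump_expect {R : realType} (N : nat) (TL TR K : R)
  (f : (nat -> R) -> R) (E : nat -> R) (i : nat) : \bar R :=
  ((clock_rate N TL TR K E i / total_rate N TL TR K E)%:E *
   \int[@lebesgue_measure R]_(p in `]0%R, 1%R[%classic)
     \int[@lebesgue_measure R]_(x in `]0%R, +oo[%classic)
        (f (jump N i E p x) *
         (expR (- x / bath_mean TL TR i) / bath_mean TL TR i))%:E)%E.

Definition a_coef {R : realType} (N m : nat) : R :=
  1 - ((2 ^ m.-1)%:R - 1) / ((2 ^ N)%:R - 1).

Definition block_sum {R : realType} (E : nat -> R) (n k : nat) : R :=
  \sum_(0 <= j < n) E (k + j)%N.

Definition Vnk {R : realType} (N : nat) (eta : R) (n k : nat) (E : nat -> R) : R :=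
  powR (block_sum E n k) (a_coef N n * eta - 1).

(* When clock k (resp. k + n) rings, the block sum S = E_k + ... + E_(k+n-1)
   is multiplied by at least q(p), with q(p) = p or 1 - p: the block can only
   lose the share of energy handed to its outer neighbour, and a heat bath only
   adds energy.  As b = a_n eta lies in (0, 1], V = S^(b-1) is decreasing in S,
   so after the jump V <= q(p)^(b-1) S^(b-1), and int_0^1 q(p)^(b-1) dp = 1/b.
   The ringing clock is adjacent to the block, so its rate is at most sqrt S,
   and it rings first with probability R_i / calR; this gives the bound with
   C = 2 / eta >= 1 / b. *)

From HB Require Import structures.
From mathcomp Require Import all_boot all_order all_algebra.
From mathcomp Require Import all_classical all_reals all_analysis.
From mathcomp Require Import ring lra zify.
From mathcomp Require Import measurable_realfun exponential_distribution.
Import Order.TTheory GRing.Theory Num.Theory.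
Import numFieldNormedType.Exports.
Local Open Scope classical_set_scope.
Local Open Scope ring_scope.

Section powR_facts.
Context {R : realType}.

Lemma continuous_powR (a x : R) : 0 < x -> {for x, continuous (fun y : R => y `^ a)}.
Proof.
move=> x_gt0; apply/differentiable_continuous/derivable1_diffP.
by have [] := is_derive1_powR a x_gt0.
Qed.

Lemma powR_le1 (x a : R) : 0 <= x <= 1 -> 0 <= a -> x `^ a <= 1.
Proof.
move=> /andP[x_ge0 x_le1] a_ge0.
have := ge0_ler_powR a_ge0 (_ : x \in Num.nneg) (_ : 1 \in Num.nneg) x_le1.
by rewrite powR1; apply; rewrite nnegrE.
Qed.

Lemma le0_ger_powR (r x y : R) : r <= 0 -> 0 < x -> x <= y -> y `^ r <= x `^ r.
Proof.
move=> r_le0 x_gt0 xy; have y_gt0 := lt_le_trans x_gt0 xy.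
by rewrite /powR !gt_eqF// ler_expR ler_wnM2l// ler_ln.
Qed.

End powR_facts.

Section ge0_integral_le.
Context {d : measure_display} {T : measurableType d} {R : realType}.
Variable nu : {measure set T -> \bar R}.

(* For nonnegative functions the integral is a supremum over simple minorants,
   so monotonicity needs no measurability. *)
Lemma ge0_le_integral_nonmeas (D : set T) (f1 f2 : T -> \bar R) :
  (forall x, D x -> 0 <= f1 x)%E -> (forall x, D x -> f1 x <= f2 x)%E ->
  (\int[nu]_(x in D) f1 x <= \int[nu]_(x in D) f2 x)%E.
Proof.
move=> f1_ge0 f12.
have f2_ge0 x : D x -> (0 <= f2 x)%E.
  by move=> Dx; exact: le_trans (f1_ge0 x Dx) (f12 x Dx).
rewrite ge0_integralE// ge0_integralE//; apply: ereal_sup_le => _ [h hf1 <-].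
exists h => //= x; apply: le_trans (hf1 x) _.
by rewrite /patch; case: ifPn => // /set_mem; exact: f12.
Qed.

Lemma ge0_integral_scale_le (D : set T) (g : T -> R) (c : R) :
  measurable D -> measurable_fun D g -> (forall x, D x -> 0 <= g x) ->
  (\int[nu]_(x in D) (g x)%:E <= 1)%E -> 0 <= c ->
  (\int[nu]_(x in D) (c * g x)%:E <= c%:E)%E.
Proof.
move=> mD mg g_ge0 int_g c_ge0.
under eq_integral do rewrite EFinM.
rewrite ge0_integralZl_EFin//.
- by rewrite -[leRHS]mule1 lee_wpmul2l ?lee_fin.
- exact/measurable_EFinP.
Qed.

End ge0_integral_le.

Section unit_interval_exhaustion.
Context {R : realType}.
Local Notation mu := (@lebesgue_measure R).

Let margin (i : nat) : R := (i.+3%:R)^-1.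

Definition inner_segment (i : nat) : set R := `[margin i, 1 - margin i].

Let margin_bounds i : 0 < margin i < 2^-1.
Proof. by rewrite invr_gt0 ltr0n /= ltf_pV2 ?posrE ?ltr0n// ltr_nat. Qed.

Lemma inner_segment_sub i : inner_segment i `<=` `]0, 1[%classic.
Proof.
move=> x; have := margin_bounds i; rewrite /inner_segment /= !in_itv /=.
by move=> /andP[? ?] /andP[? ?]; apply/andP; split; lra.
Qed.

Lemma nondecreasing_inner_segment :
  {homo inner_segment : i j / (i <= j)%N >-> (i <= j)%O}.
Proof.
move=> i j ij; apply/subsetPset => x; rewrite /inner_segment /= !in_itv /=.
have aji : margin j <= margin i.
  by rewrite lef_pV2 ?posrE ?ltr0n// ler_nat !ltnS.
by move=> /andP[? ?]; apply/andP; split; lra.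
Qed.

Lemma bigcup_inner_segment : \bigcup_i inner_segment i = `]0, 1[%classic.
Proof.
apply/seteqP; split=> [x [i _ /inner_segment_sub]//|x].
rewrite /= in_itv /= => /andP[x_gt0 x_lt1].
set m := Num.min x (1 - x).
have m_gt0 : 0 < m by rewrite lt_min x_gt0 subr_gt0.
exists (Num.truncn m^-1) => //.
have : margin (Num.truncn m^-1) < m.
  rewrite -[ltRHS]invrK ltf_pV2 ?posrE ?ltr0n ?invr_gt0//.
  apply: lt_le_trans (truncnS_gt _) _.
  by rewrite ler_nat; apply: leq_trans (leqnSn _) (leqnSn _).
rewrite /inner_segment /= in_itv /= lt_min => /andP[? ?].
by apply/andP; split; lra.
Qed.

(* The integrand may blow up at 0 or 1: apply the fundamental theorem of
   calculus on each inner segment and pass to the limit. *)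
Lemma ge0_integral_oo01_le1 (f F : R -> R) :
  (forall x : R, 0 < x < 1 -> 0 <= f x) ->
  (forall x : R, 0 < x < 1 -> {for x, continuous f}) ->
  (forall x : R, 0 < x < 1 -> is_derive x 1 F (f x)) ->
  (forall x : R, 0 < x < 1 -> 0 <= F x <= 1) ->
  (\int[mu]_(x in `]0%R, 1%R[) (f x)%:E <= 1)%E.
Proof.
move=> f_ge0 cf dF F01.
have mf : measurable_fun (`]0, 1[ : set R) f.
  apply: open_continuous_measurable_fun; first exact: interval_open.
  by move=> x; rewrite inE /= in_itv /= => /cf.
have seg01 i x : inner_segment i x -> 0 < x < 1.
  by move=> /inner_segment_sub; rewrite /= in_itv.
have mfi i : measurable_fun (inner_segment i) (EFin \o f).
  by apply/measurable_EFinP; apply: measurable_funS mf => //; exact: inner_segment_sub.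
have fi_ge0 i x : inner_segment i x -> (0 <= (EFin \o f) x)%E.
  by move=> /seg01 x01; rewrite lee_fin f_ge0.
have := ge0_nondecreasing_set_cvg_integral (mu := mu) nondecreasing_inner_segment
  (fun i => measurable_itv _) mfi fi_ge0.
rewrite bigcup_inner_segment => cvg_int.
rewrite -(cvg_lim _ cvg_int)//; apply: lime_le; first exact: cvgP cvg_int.
apply: nearW => i; have /andP[a0 a2] := margin_bounds i.
have inner x : margin i <= x <= 1 - margin i -> 0 < x < 1.
  by move=> /andP[? ?]; apply/andP; split; lra.
have dFi x : margin i <= x <= 1 - margin i -> is_derive x 1 F (f x).
  by move/inner; exact: dF.
rewrite /= (@continuous_FTC2 _ f F); first 1 last.
- lra.
- apply: continuous_in_subspaceT => x; rewrite inE /= in_itv /= => /inner.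
  exact: cf.
- split.
  + move=> x; rewrite in_itv /= => /andP[? ?].
    by have /dFi[] : margin i <= x <= 1 - margin i by apply/andP; split; lra.
  + apply/cvg_at_right_filter/differentiable_continuous/derivable1_diffP.
    by have /dFi[] : margin i <= margin i <= 1 - margin i by apply/andP; split; lra.
  + apply/cvg_at_left_filter/differentiable_continuous/derivable1_diffP.
    by have /dFi[] : margin i <= 1 - margin i <= 1 - margin i by apply/andP; split; lra.
- move=> x; rewrite in_itv /= => /andP[? ?]; rewrite derive1E.
  by have /dFi[_ ->] : margin i <= x <= 1 - margin i by apply/andP; split; lra.
have /andP[? ?] : 0 <= F (margin i) <= 1 by apply: F01; apply/andP; split; lra.
have /andP[? ?] : 0 <= F (1 - margin i) <= 1 by apply: F01; apply/andP; split; lra.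
by rewrite -EFinB lee_fin; lra.
Qed.

End unit_interval_exhaustion.

Section densities.
Context {R : realType}.
Local Notation mu := (@lebesgue_measure R).

Lemma integral_powR_le1 (b : R) : 0 < b ->
  (\int[mu]_(x in `]0%R, 1%R[) (b * x `^ (b - 1))%:E <= 1)%E.
Proof.
move=> b_gt0.
apply: (ge0_integral_oo01_le1 (fun x => b * x `^ (b - 1)) (fun x => x `^ b)).
- by move=> x _; rewrite mulr_ge0 ?powR_ge0 ?ltW.
- move=> x /andP[x_gt0 _].
  by apply: continuousM; [exact: cst_continuous | exact: continuous_powR].
- by move=> x /andP[x_gt0 _]; exact: is_derive1_powR.
- by move=> x /andP[x_gt0 x_lt1]; rewrite powR_ge0 powR_le1 ?ltW ?x_gt0.
Qed.

Lemma integral_onem_powR_le1 (b : R) : 0 < b ->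
  (\int[mu]_(x in `]0%R, 1%R[) (b * (1 - x) `^ (b - 1))%:E <= 1)%E.
Proof.
move=> b_gt0; apply: (ge0_integral_oo01_le1 (fun x => b * (1 - x) `^ (b - 1))
    (fun x => 1 - (1 - x) `^ b)).
- by move=> x _; rewrite mulr_ge0 ?powR_ge0 ?ltW.
- move=> x /andP[_ x_lt1].
  apply: (@continuousM _ R^o (fun=> b) (fun y => (1 - y) `^ (b - 1))).
    exact: cst_continuous.
  apply: (@continuous_comp _ _ _ (fun y : R => 1 - y) (fun y => y `^ (b - 1))).
    by apply: continuousB; [exact: cst_continuous | exact: cvg_id].
  by apply: continuous_powR; rewrite subr_gt0.
- move=> x /andP[_ x_lt1].
  have onem_x_gt0 : 0 < 1 - x by rewrite subr_gt0.
  have d_onem : is_derive x 1 (fun y : R => 1 - y) (-1).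
    by rewrite -sub0r; exact: is_deriveB.
  have d_pow := @is_derive1_comp _ (fun y => y `^ b) (fun y => 1 - y) x _ _
    (is_derive1_powR b onem_x_gt0) d_onem.
  have := is_deriveB (is_derive_cst (1 : R) x 1) d_pow.
  by rewrite sub0r mulrN1 opprK.
- move=> x /andP[x_gt0 x_lt1].
  have : (1 - x) `^ b <= 1 by apply: powR_le1; [apply/andP; split; lra | exact: ltW].
  by have := powR_ge0 (1 - x) b; move=> ? ?; apply/andP; split; lra.
Qed.

Lemma measurable_exponential_density (m : R) :
  measurable_fun setT (fun x : R => expR (- x / m) / m).
Proof.
apply: measurable_funM => //; apply: measurableT_comp => //.
by apply: measurable_funM => //; exact: measurableT_comp.
Qed.

Lemma exponential_density_integral_le1 (m : R) : 0 < m ->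
  (\int[mu]_(x in `]0%R, +oo[) (expR (- x / m) / m)%:E <= 1)%E.
Proof.
move=> m_gt0; have minv_ge0 : 0 <= m^-1 by rewrite invr_ge0 ltW.
rewrite -(integral_exponential_pdf (rate := m^-1)) ?invr_gt0//.
under eq_integral => x.
  rewrite inE /= in_itv /= andbT => x_gt0.
  rewrite (_ : expR (- x / m) / m = exponential_pdf m^-1 x); first over.
  by rewrite exponential_pdfE ?ltW// [RHS]mulrC !mulNr (mulrC x).
apply: ge0_subset_integral => //.
- by apply/measurable_EFinP; exact: measurable_exponential_pdf.
- by move=> x _; rewrite lee_fin exponential_pdf_ge0.
Qed.

Lemma uniform_exponential_integral_le (m c : R) (w : R -> R) (G : R -> R -> R) :
  0 < m -> 0 <= c ->
  measurable_fun (`]0, 1[ : set R) w -> (forall p, 0 < p < 1 -> 0 <= w p) ->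
  (\int[mu]_(p in `]0%R, 1%R[) (w p)%:E <= 1)%E ->
  (forall p x, 0 < p < 1 -> 0 < x -> 0 <= G p x <= c * w p) ->
  (\int[mu]_(p in `]0%R, 1%R[) \int[mu]_(x in `]0%R, +oo[)
     (G p x * (expR (- x / m) / m))%:E <= c%:E)%E.
Proof.
move=> m_gt0 c_ge0 mw w_ge0 int_w G_le.
have dens_ge0 x : 0 <= expR (- x / m) / m by rewrite divr_ge0 ?expR_ge0 ?ltW.
have mdens : measurable_fun (`]0, +oo[ : set R) (fun x => expR (- x / m) / m).
  exact: measurable_funTS (measurable_exponential_density m).
have w_itv_ge0 p : `]0, 1[%classic p -> 0 <= w p by rewrite /= in_itv => /w_ge0.
apply: le_trans _ (ge0_integral_scale_le mu _ _ _ (measurable_itv _) mw w_itv_ge0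
  int_w c_ge0).
apply: ge0_le_integral_nonmeas => p; rewrite /= in_itv /= => p01.
- apply: integral_ge0 => x; rewrite /= in_itv /= andbT => x_gt0.
  by have /andP[G_ge0 _] := G_le p x p01 x_gt0; rewrite lee_fin mulr_ge0.
- have cw_ge0 : 0 <= c * w p by rewrite mulr_ge0 ?w_ge0.
  apply: le_trans _ (ge0_integral_scale_le mu _ _ _ (measurable_itv _) mdens
    (fun x _ => dens_ge0 x) (exponential_density_integral_le1 m m_gt0) cw_ge0).
  apply: ge0_le_integral_nonmeas => x; rewrite /= in_itv /= andbT => x_gt0;
    have /andP[G_ge0 G_le_cw] := G_le p x p01 x_gt0.
  + by rewrite lee_fin mulr_ge0.
  + by rewrite lee_fin ler_wpM2r.
Qed.

End densities.

Section energy_exchange.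
Context {R : realType}.
Local Notation mu := (@lebesgue_measure R).
Implicit Types (N n k i j : nat) (TL TR K : R) (E : nat -> R).

Lemma rateR_ge0 K (a b : R) : 0 <= K -> 0 <= rateR K a b.
Proof. by move=> K_ge0; rewrite /rateR le_min K_ge0 sqrtr_ge0. Qed.

Lemma rateR_le_sqrtl K (a b : R) : rateR K a b <= Num.sqrt a.
Proof. by rewrite /rateR ge_min ler_wsqrtr ?ge_min ?lexx ?orbT. Qed.

Lemma rateR_le_sqrtr K (a b : R) : rateR K a b <= Num.sqrt b.
Proof. by rewrite /rateR ge_min ler_wsqrtr ?ge_min ?lexx ?orbT. Qed.

Lemma total_rate_ge0 N TL TR K E : 0 <= K -> 0 <= total_rate N TL TR K E.
Proof.
by move=> K_ge0; rewrite /total_rate big_nat sumr_ge0// => i _; exact: rateR_ge0.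
Qed.

Lemma ext_inner N TL TR E j : (1 <= j <= N)%N -> ext N TL TR E j = E j.
Proof. by move=> j_in; rewrite /ext ifF ?ifF//; apply/eqP; lia. Qed.

Lemma a_coef_bounds N n : (1 <= n <= N)%N -> 2^-1 <= @a_coef R N n <= 1.
Proof.
move=> /andP[n_ge1 n_leN].
have pow_ge1 : 1 <= (2 ^ n.-1)%:R :> R by rewrite ler1n expn_gt0.
have pow_le : 2 * (2 ^ n.-1)%:R <= (2 ^ N)%:R :> R.
  by rewrite -natrM ler_nat -expnS prednK// leq_pexp2l.
have den_gt0 : 0 < (2 ^ N)%:R - 1 :> R by lra.
rewrite /a_coef; apply/andP; split.
  suff : ((2 ^ n.-1)%:R - 1) / ((2 ^ N)%:R - 1) <= 2^-1 :> R by lra.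
  by rewrite ler_pdivrMr//; lra.
suff : 0 <= ((2 ^ n.-1)%:R - 1) / ((2 ^ N)%:R - 1) :> R by lra.
by apply: divr_ge0; [rewrite subr_ge0 | exact: ltW].
Qed.

Lemma block_sum_ge_term E n k j :
  (forall l, (l < n)%N -> 0 <= E (k + l)%N) -> (j < n)%N ->
  E (k + j)%N <= block_sum E n k.
Proof.
move=> E_ge0 jn; rewrite /block_sum (bigD1_seq j) ?mem_iota ?iota_uniq ?subn0//=.
rewrite lerDl big_seq_cond sumr_ge0// => l /andP[+ _].
by rewrite mem_iota subn0 => /andP[_ ln]; exact: E_ge0.
Qed.

Lemma block_sum_scale_le E E' n k (c : R) :
  (forall j, (j < n)%N -> c * E (k + j)%N <= E' (k + j)%N) ->
  c * block_sum E n k <= block_sum E' n k.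
Proof.
by move=> cE_le; rewrite /block_sum mulr_sumr ler_sum_nat// => j /andP[_]; exact: cE_le.
Qed.

(* Only the right site of an interior clock can lose more than the factor p. *)
Lemma jump_ge_scale N i j E (p x : R) :
  (forall l, (1 <= l <= N)%N -> 0 <= E l) -> 0 <= x -> 0 <= p <= 1 ->
  (1 <= j <= N)%N -> (i == 1%N) || (j != i) ->
  p * E j <= jump N i E p x j.
Proof.
move=> E_ge0 x_ge0 /andP[p_ge0 p_le1] j_in ij.
have scale_add a y : 0 <= y -> p * a <= p * (a + y).
  by move=> y_ge0; apply: ler_wpM2l => //; rewrite lerDl.
have scale_Ej : p * E j <= E j by rewrite ler_piMl ?E_ge0.
rewrite /jump; have [i1|i_neq1] := eqVneq i 1%N.
  by case: eqVneq => [->|_] //; exact: scale_add.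
have [iN|i_neqN] := eqVneq i N.+1.
  by case: eqVneq => [->|_] //; exact: scale_add.
have [ji|_] := eqVneq j i.-1.
  by rewrite ji; apply: scale_add; apply: E_ge0; lia.
by move: ij; rewrite (negbTE i_neq1) => /negbTE ->.
Qed.

Lemma jump_ge_scale_onem N i j E (p x : R) :
  (forall l, (1 <= l <= N)%N -> 0 <= E l) -> 0 <= p <= 1 ->
  (1 <= j <= N)%N -> i != 1%N -> i != N.+1 -> j != i.-1 ->
  (1 - p) * E j <= jump N i E p x j.
Proof.
move=> E_ge0 /andP[p_ge0 p_le1] j_in i_neq1 i_neqN j_neqi.
rewrite /jump (negbTE i_neq1) (negbTE i_neqN) (negbTE j_neqi).
case: eqVneq => [ji|_]; last by rewrite ler_piMl ?E_ge0 ?gerBl.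
rewrite ji; apply: ler_wpM2l; first by rewrite subr_ge0.
by rewrite lerDr; apply: E_ge0; lia.
Qed.

Lemma clock_rate_le_sqrt_block N TL TR K E n k i :
  (forall l, (1 <= l <= N)%N -> 0 <= E l) -> (0 < n)%N -> (1 <= k)%N ->
  (k + n <= N.+1)%N -> (k <= i <= k + n)%N ->
  clock_rate N TL TR K E i <= Num.sqrt (block_sum E n k).
Proof.
move=> E_ge0 n_gt0 k_ge1 kn_le i_in.
have E_block l : (l < n)%N -> 0 <= E (k + l)%N by move=> ln; apply: E_ge0; lia.
rewrite /clock_rate; have [i_lt|i_ge] := ltnP i (k + n).
- apply: le_trans (rateR_le_sqrtr _ _ _) _; rewrite ext_inner; last by lia.
  rewrite ler_wsqrtr// -[i](subnKC (_ : (k <= i)%N)); last by lia.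
  by apply: block_sum_ge_term => //; lia.
- apply: le_trans (rateR_le_sqrtl _ _ _) _; rewrite ext_inner; last by lia.
  rewrite ler_wsqrtr// (_ : i.-1 = k + n.-1)%N; last by lia.
  by apply: block_sum_ge_term => //; lia.
Qed.

Lemma first_jump_expect_block_le (q : R -> R) N (TL TR K b C : R) E n k i :
  0 < TL -> 0 < TR -> 0 <= total_rate N TL TR K E ->
  0 <= clock_rate N TL TR K E i <= Num.sqrt (block_sum E n k) ->
  0 < block_sum E n k -> 0 < b <= 1 -> b^-1 <= C ->
  measurable_fun setT q -> (forall p, 0 < p < 1 -> 0 < q p) ->
  (\int[mu]_(p in `]0%R, 1%R[) (b * q p `^ (b - 1))%:E <= 1)%E ->
  (forall p x, 0 < p < 1 -> 0 < x ->
     q p * block_sum E n k <= block_sum (jump N i E p x) n k) ->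
  (first_jump_expect N TL TR K (fun E' => powR (block_sum E' n k) (b - 1)) E i
     <= (C / total_rate N TL TR K E * powR (block_sum E n k) (b - 2^-1))%:E)%E.
Proof.
move=> TL_gt0 TR_gt0 tot_ge0 /andP[r_ge0 r_le] S_gt0 /andP[b_gt0 b_le1] bC.
move=> mq q_gt0 int_q q_le.
rewrite /first_jump_expect.
set S := block_sum E n k; set r := clock_rate _ _ _ _ _ _.
set tot := total_rate _ _ _ _ _.
have m_gt0 : 0 < bath_mean TL TR i by rewrite /bath_mean; case: ifP.
have c_ge0 : 0 <= S `^ (b - 1) / b by rewrite divr_ge0 ?powR_ge0 ?ltW.
have mw : measurable_fun (`]0, 1[ : set R) (fun p => b * q p `^ (b - 1)).
  apply: measurable_funTS; apply: measurable_funM => //.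
  exact: measurableT_comp (measurable_powR _) mq.
have inner := @uniform_exponential_integral_le R _ _ _
  (fun p x => powR (block_sum (jump N i E p x) n k) (b - 1)) m_gt0 c_ge0 mw.
apply: le_trans (lee_wpmul2l _ (inner _ int_q _)) _.
- by rewrite lee_fin divr_ge0.
- by move=> p p01; rewrite mulr_ge0 ?powR_ge0 ?ltW.
- move=> p x p01 x_gt0; apply/andP; split; first exact: powR_ge0.
  have qp_gt0 := q_gt0 p p01.
  rewrite mulrA divfK ?gt_eqF// -powRM ?(ltW S_gt0) ?(ltW qp_gt0)//.
  by apply: le0_ger_powR; [lra | exact: mulr_gt0 | rewrite mulrC q_le].
rewrite -EFinM lee_fin (_ : b - 2^-1 = (b - 1) + 2^-1); last by lra.
rewrite (@powRD _ S (b - 1) 2^-1) ?(gt_eqF S_gt0) ?implybT// powR12_sqrt ?(ltW S_gt0)//.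
have -> : r / tot * (S `^ (b - 1) / b) = (r * b^-1) * (S `^ (b - 1) * tot^-1) by ring.
have -> : C / tot * (S `^ (b - 1) * Num.sqrt S)
          = (Num.sqrt S * C) * (S `^ (b - 1) * tot^-1) by ring.
apply: ler_wpM2r; first by rewrite mulr_ge0 ?powR_ge0 ?invr_ge0.
by apply: ler_pM => //; rewrite invr_ge0 ltW.
Qed.

End energy_exchange.

Section block_clocks.
Context {R : realType}.
Variables (N n k : nat) (TL TR K b C : R) (E : nat -> R).
Hypotheses (TL_gt0 : 0 < TL) (TR_gt0 : 0 < TR) (K_ge0 : 0 <= K).
Hypothesis E_gt0 : forall j, (1 <= j <= N)%N -> 0 < E j.
Hypotheses (n_gt0 : (0 < n)%N) (k_gt0 : (0 < k)%N) (kn_le : (k + n <= N.+1)%N).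
Hypotheses (b_in : 0 < b <= 1) (b_inv_le : b^-1 <= C).

Let V (E' : nat -> R) := powR (block_sum E' n k) (b - 1).

Let E_ge0 l : (1 <= l <= N)%N -> 0 <= E l.
Proof. by move/E_gt0/ltW. Qed.

Let k_block j : (j < n)%N -> (1 <= k + j <= N)%N.
Proof. by move=> ?; lia. Qed.

Let E_block l : (l < n)%N -> 0 <= E (k + l)%N.
Proof. by move/k_block/E_ge0. Qed.

Let block_gt0 : 0 < block_sum E n k.
Proof.
exact: lt_le_trans (E_gt0 _ (k_block 0 n_gt0)) (block_sum_ge_term _ _ _ 0 E_block n_gt0).
Qed.

Let rate_le i : (k <= i <= k + n)%N ->
  0 <= clock_rate N TL TR K E i <= Num.sqrt (block_sum E n k).
Proof. by move=> i_in; rewrite rateR_ge0// clock_rate_le_sqrt_block. Qed.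

Let total_ge0 : 0 <= total_rate N TL TR K E.
Proof. exact: total_rate_ge0. Qed.

Let jump_block_ge_p i : (i == 1%N) || (k + n <= i)%N -> forall p x, 0 < p < 1 -> 0 < x ->
  p * block_sum E n k <= block_sum (jump N i E p x) n k.
Proof.
move=> i_out p x /andP[p_gt0 p_lt1] x_gt0; apply: block_sum_scale_le => j jn.
apply: (jump_ge_scale _ _ _ _ _ _ E_ge0 (ltW x_gt0)).
- by apply/andP; split; exact: ltW.
- exact: k_block.
- case/orP: i_out => [->//|kn_i]; apply/orP; right.
  by rewrite neq_ltn (leq_trans _ kn_i) ?orTb// ltn_add2l.
Qed.

Let jump_block_ge_onem p x : k != 1%N -> 0 < p < 1 ->
  (1 - p) * block_sum E n k <= block_sum (jump N k E p x) n k.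
Proof.
move=> k_neq1 /andP[p_gt0 p_lt1]; apply: block_sum_scale_le => j jn.
apply: jump_ge_scale_onem => //; first by apply/andP; split; rewrite ?subr_ge0 ?gerBl ltW.
- exact: k_block.
- by apply/eqP; lia.
- by apply/eqP; lia.
Qed.

Lemma first_jump_expect_left_le :
  (first_jump_expect N TL TR K V E k
     <= (C / total_rate N TL TR K E * powR (block_sum E n k) (b - 2^-1))%:E)%E.
Proof.
have [b_gt0 _] := andP b_in.
have rate_k : (k <= k <= k + n)%N by rewrite leqnn leq_addr.
have [k1|k_neq1] := eqVneq k 1%N.
- apply: (first_jump_expect_block_le id) => //; first exact: rate_le.
  + by move=> p /andP[].
  + exact: integral_powR_le1.
  + by apply: jump_block_ge_p; rewrite k1.
- apply: (first_jump_expect_block_le (fun p => 1 - p)) => //; first exact: rate_le.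
  + exact: measurable_funB.
  + by move=> p /andP[_ p_lt1]; rewrite subr_gt0.
  + exact: integral_onem_powR_le1.
  + by move=> p x p01 _; exact: jump_block_ge_onem.
Qed.

Lemma first_jump_expect_right_le :
  (first_jump_expect N TL TR K V E (k + n)
     <= (C / total_rate N TL TR K E * powR (block_sum E n k) (b - 2^-1))%:E)%E.
Proof.
have [b_gt0 _] := andP b_in.
apply: (first_jump_expect_block_le id) => //.
- by apply: rate_le; rewrite leq_addr leqnn.
- by move=> p /andP[].
- exact: integral_powR_le1.
- by apply: jump_block_ge_p; rewrite leqnn orbT.
Qed.

End block_clocks.

Theorem lemma4p2 (R : realType) (N : nat) (hN : (1 <= N)%N) :
  exists eta0 : R, 0 < eta0 /\
  forall eta : R, 0 < eta -> eta < eta0 ->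
  exists C : R, 0 < C /\
  forall TL TR : R, 0 < TL -> 0 < TR ->
  exists K0 : R, forall K : R, K0 <= K ->
  forall (E : nat -> R), (forall j, (1 <= j <= N)%N -> 0 < E j) ->
  forall n k : nat, (1 <= n <= N)%N -> (1 <= k <= N - n + 1)%N ->
    (first_jump_expect N TL TR K (Vnk N eta n k) E k
       <= (C / total_rate N TL TR K E
           * powR (block_sum E n k) (a_coef N n * eta - 2^-1))%:E)%E /\
    (first_jump_expect N TL TR K (Vnk N eta n k) E (k + n)
       <= (C / total_rate N TL TR K E
           * powR (block_sum E n k) (a_coef N n * eta - 2^-1))%:E)%E.
Proof.
exists 1; split => // eta eta_gt0 eta_lt1.
exists (2 / eta); split; first by rewrite divr_gt0.
move=> TL TR TL_gt0 TR_gt0; exists 0 => K K_ge0 E E_gt0 n k n_in k_in.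
have /andP[a_ge a_le1] := @a_coef_bounds R N n n_in.
have b_in : 0 < a_coef N n * eta <= 1 by apply/andP; split; nra.
have b_inv_le : (a_coef N n * eta)^-1 <= 2 / eta.
  by rewrite -invf_div lef_pV2 ?posrE ?divr_gt0//; nra.
case/andP: n_in k_in => n_gt0 n_leN /andP[k_gt0 k_le].
have kn_le : (k + n <= N.+1)%N by lia.
split.
- exact: first_jump_expect_left_le.
- exact: first_jump_expect_right_le.
Qed.
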